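(* Let $d\ge1$ and consider the $d$-dimensional P-RAN process (see context). For $k\ge d+1$ let $P(k)=\lim_{t\to\infty}\mathbb{E}[N_t(k)]/(d+2+t)$, where $N_t(k)$ is the number of vertices of degree $k$ after $t$ steps. Then $$P(d+1)=\frac12,\qquad P(k)=\frac{dk-d^2-d+1}{dk-d^2+d+2}\,P(k-1)\quad\text{for } k>d+1.$$
   Context: P-RAN process in dimension $d$: at step $0$ the graph is a complete graph on $d+2$ vertices and the list $C_0$ consists of its $d+2$ $(d+1)$-cliques. At each step a clique $c$ is chosen uniformly at random from the current list; a new vertex $v$ is added and joined to all $d+1$ vertices of $c$; $c$ remains in the list and the $d+1$ cliques $\{v\}\cup(c\setminus\{u\})$, $u\in c$, are appended. After $t$ steps the graph has $d+2+t$ vertices and the list has $d+2+t(d+1)$ cliques. Every vertex has degree at least $d+1$. *)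

From HB Require Import structures.
From mathcomp Require Import all_boot all_order all_algebra.
From mathcomp Require Import all_classical all_reals all_analysis.
Set Implicit Arguments. Unset Strict Implicit. Unset Printing Implicit Defensive.
Import Order.TTheory GRing.Theory Num.Theory.
Local Open Scope ring_scope.

(* State of the P-RAN process: vertices are 0 .. nv-1, an edge list,
   and the (ordered) list of (d+1)-cliques. *)
Record pran_state := PState {
  nv : nat;
  edges : seq (nat * nat);
  cliques : seq (seq nat) }.

(* Step 0: complete graph on d+2 vertices and its d+2 (d+1)-cliques. *)
Definition pran_init (d : nat) : pran_state :=
  PState d.+2
    [seq (i, j) | i <- iota 0 d.+2, j <- [seq j <- iota 0 d.+2 | (i < j)%N]]
    [seq [seq x <- iota 0 d.+2 | x != u] | u <- iota 0 d.+2].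

(* One step with chosen clique c: add vertex v, join it to c, keep c in
   the list and append the cliques {v} ∪ (c \ {u}), u ∈ c. *)
Definition pran_step (s : pran_state) (c : seq nat) : pran_state :=
  let v := nv s in
  PState v.+1 (edges s ++ [seq (x, v) | x <- c])
    (cliques s ++ [seq v :: [seq x <- c | x != u] | u <- c]).

Definition pran_deg (s : pran_state) (v : nat) : nat :=
  count (fun e : nat * nat => (e.1 == v) || (e.2 == v)) (edges s).

Definition Ndeg (k : nat) (s : pran_state) : nat :=
  count (fun v => pran_deg s v == k) (iota 0 (nv s)).

(* expect d t f = E[f(state after t steps)], the clique at each step being
   chosen uniformly at random from the current list. *)
Fixpoint pran_expect {R : realType} (d t : nat) (f : pran_state -> R) : R :=
  match t with
  | 0 => f (pran_init d)
  | t'.+1 => pran_expect d t' (fun s =>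
      (size (cliques s))%:R^-1 *
      \sum_(i < size (cliques s)) f (pran_step s (nth [::] (cliques s) i)))
  end.

From HB Require Import structures.
From mathcomp Require Import all_boot all_order all_algebra.
From mathcomp Require Import all_classical all_reals all_analysis.
From mathcomp Require Import zify ring lra.

Set Implicit Arguments.
Unset Strict Implicit.
Unset Printing Implicit Defensive.

Import Order.TTheory GRing.Theory Num.Theory numFieldNormedType.Exports.
Local Open Scope classical_set_scope.
Local Open Scope ring_scope.

(* Every vertex of degree j lies in exactly d(j-d)+1 of the listed cliques: a new
   vertex lies in its d+1 cliques, and choosing a clique through an old vertex raises
   its degree by one and adds d cliques through it.  As the list has
   L_t = d+2+t(d+1) cliques after t steps, the expected number e_t(k) of vertices of
   degree k satisfies, with a_j = d(j-d)+1,
     e_{t+1}(k) = (1 - a_k/L_t) e_t(k) + a_{k-1}/L_t e_t(k-1) + [k = d+1].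
   A recursion x_{t+1} = (1 - a/(t+g)) x_t + b_t with b_t -> beta forces
   x_t/t -> beta/(1+a): the deviation from the affine solution beta/(1+a) (t+g) is
   o(t).  Induction on k gives P(k) = (a_{k-1} P(k-1) + (d+1)[k = d+1])/(d+1+a_k),
   which is the claimed recursion. *)

Lemma count_predC1_uniq (T : eqType) (s : seq T) (x : T) :
  uniq s -> x \in s -> count (predC1 x) s = (size s).-1.
Proof. by move=> s_uniq xs; rewrite -size_filter -rem_filter // size_rem. Qed.

Lemma count_iota_ltn (n w : nat) : count (fun i => i < w)%N (iota 0 n) = minn w n.
Proof.
elim: n => [|n IHn]; first by rewrite minn0.
by rewrite -[n.+1]addn1 iotaD count_cat IHn /=; case: ltnP => ?; lia.
Qed.

Lemma count_iota_gtn (n w : nat) : count (fun j => w < j)%N (iota 0 n) = (n - w.+1)%N.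
Proof.
elim: n => // n IHn.
by rewrite -[n.+1]addn1 iotaD count_cat IHn /=; case: ltnP => ?; lia.
Qed.

Lemma count_allpairs (S T : Type) (P : pred (S * T)) (s : seq S) (t : S -> seq T) :
  count P [seq (i, j) | i <- s, j <- t i] = (\sum_(i <- s) count (fun j => P (i, j)) (t i))%N.
Proof. by elim: s => [|i s IHs]; rewrite ?big_nil ?big_cons // count_cat count_map IHs. Qed.

Lemma sum_nat_of_bool (T : Type) (s : seq T) (P : pred T) :
  (\sum_(i <- s) (P i : nat))%N = count P s.
Proof. by elim: s => [|i s IHs]; rewrite ?big_nil ?big_cons ?IHs. Qed.

Lemma count_complete_graph_edges (n w : nat) :
  count (fun e : nat * nat => (e.1 == w) || (e.2 == w))
    [seq (i, j) | i <- iota 0 n, j <- [seq j <- iota 0 n | (i < j)%N]] =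
  if (w < n)%N then n.-1 else 0%N.
Proof.
have w_iota : count (pred1 w) (iota 0 n) = (w < n)%N.
  by rewrite count_uniq_mem ?iota_uniq // mem_iota.
rewrite count_allpairs.
under eq_bigr => i _.
  rewrite count_filter (_ : count _ _ = (i == w) * (n - w.+1) + (i < w) * (w < n))%N.
    over.
  have [-> | iw] := eqVneq i w.
    by rewrite ltnn mul1n addn0 -count_iota_gtn.
  rewrite mul0n add0n -w_iota.
  transitivity (count (fun j => (i < w)%N && (j == w)) (iota 0 n)).
    by apply: eq_count => j /=; case: (eqVneq j w) => [->|]; rewrite ?andbF ?andbT.
  by case: (i < w)%N; rewrite ?count_pred0 // mul1n.
rewrite big_split /= -!big_distrl /= !sum_nat_of_bool count_iota_ltn w_iota.
by case: ltnP => wn; lia.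
Qed.

Section PerturbedContraction.
Variables (R : realType) (z r eps : nat -> R).
Hypothesis zS : forall t, z t.+1 = r t * z t + eps t.

Lemma norm_contraction_le (T : nat) (delta : R) :
  (forall t, (T <= t)%N -> `|r t| <= 1 /\ `|eps t| <= delta) ->
  forall t, (T <= t)%N -> `|z t| <= `|z T| + (t - T)%:R * delta.
Proof.
move=> bound; elim=> [|t IH]; first by rewrite leqn0 => /eqP ->; rewrite subnn mul0r addr0.
rewrite leq_eqVlt => /orP[/eqP <-|]; first by rewrite subnn mul0r addr0.
rewrite ltnS => Tt; have [r1 epsd] := bound t Tt.
rewrite zS subSn // -natr1 mulrDl mul1r addrA.
apply: le_trans (ler_normD _ _) (lerD _ epsd); rewrite normrM.
exact: le_trans (ler_piMl (normr_ge0 _) r1) (IH Tt).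
Qed.

Lemma contraction_div_linear_cvg0 (c : R) : 0 < c ->
  (\forall t \near \oo, `|r t| <= 1) -> eps @ \oo --> 0 ->
  (fun t => z t / (t%:R + c)) @ \oo --> 0.
Proof.
move=> c0 r1 eps0; apply/cvgrPdist_le => e e0.
have e20 : 0 < e / 2 by rewrite divr_gt0.
have [T _ HT] : \forall t \near \oo, `|r t| <= 1 /\ `|eps t| <= e / 2.
  by near=> t; split; [near: t | rewrite -[eps t]subr0 distrC; near: t; exact: cvgr_dist_le].
near=> t; have ct : 0 < t%:R + c by rewrite ltr_pwDr.
rewrite sub0r normrN normrM [`|_^-1|]gtr0_norm ?invr_gt0 // ler_pdivrMr //.
have Tt : (T <= t)%N by near: t; exact: nbhs_infty_ge.
have zt := @norm_contraction_le T (e / 2) HT t Tt.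
have tT : (t - T)%:R * (e / 2) <= t%:R * (e / 2) by rewrite ler_wpM2r ?ler_nat ?leq_subr // ltW.
have zTt : `|z T| <= t%:R * (e / 2).
  rewrite -ler_pdivrMr //; near: t; apply: (cvgryPge _).1; exact: cvgr_idn.
have : 0 <= c * e by rewrite mulr_ge0 ?ltW.
lra.
Unshelve. all: end_near. Qed.
End PerturbedContraction.

Lemma cvg_affine_recursion_div (R : realType) (x b : nat -> R) (a g beta c : R) :
  0 <= a -> 0 < g -> 0 < c ->
  (forall t, x t.+1 = (1 - a / (t%:R + g)) * x t + b t) -> b @ \oo --> beta ->
  (fun t => x t / (t%:R + c)) @ \oo --> beta / (1 + a).
Proof.
move=> a0 g0 c0 xS b_beta; set q := beta / (1 + a).
have tg t : 0 < t%:R + g by rewrite ltr_pwDr.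
have tc t : 0 < t%:R + c by rewrite ltr_pwDr.
pose z t := x t - q * (t%:R + g). (* deviation from the affine solution *)
have zS t : z t.+1 = (1 - a / (t%:R + g)) * z t + (b t - beta).
  rewrite /z xS -natr1 /q; field.
  have a1 : 0 < 1 + a by lra.
  by rewrite !lt0r_neq0 ?tg.
have contract : \forall t \near \oo, `|1 - a / (t%:R + g)| <= 1.
  near=> t; have a_le_t : a <= t%:R by near: t; apply: (cvgryPge _).1; exact: cvgr_idn.
  have : a / (t%:R + g) <= 1 by rewrite ler_pdivrMr // mul1r; apply: le_trans a_le_t _; rewrite lerDl ltW.
  have : 0 <= a / (t%:R + g) by rewrite divr_ge0 // ltW.
  by move=> ? ?; rewrite ger0_norm; lra.
have z0 : (fun t => z t / (t%:R + c)) @ \oo --> 0.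
  apply: (contraction_div_linear_cvg0 zS c0 contract).
  by rewrite -(subrr beta); apply: cvgB => //; exact: cvg_cst.
have shift0 : (fun t => q * (g - c) / (t%:R + c)) @ \oo --> 0.
  apply: (@contraction_div_linear_cvg0 _ _ (fun=> 1) (fun=> 0)) => //.
  - by move=> t; rewrite mul1r addr0.
  - by near=> t; rewrite normr1.
  - exact: cvg_cst.
have -> : (fun t => x t / (t%:R + c)) = (fun t => z t / (t%:R + c) + q * (g - c) / (t%:R + c) + q).
  apply: funext => t; rewrite /z; field.
  exact: lt0r_neq0 (tc t).
by have := cvgD (cvgD z0 shift0) (cvg_cst q); rewrite !add0r; apply.
Unshelve. all: end_near. Qed.

Definition clique_count (s : pran_state) (w : nat) : nat :=
  count (fun c : seq nat => w \in c) (cliques s).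

Definition clique_weight (d j : nat) : nat := (d * (j - d)).+1.

Lemma clique_weightS (d j : nat) : (d <= j)%N ->
  clique_weight d j.+1 = (clique_weight d j + d)%N.
Proof. by move=> dj; rewrite /clique_weight subSn // mulnS; lia. Qed.

Lemma pran_deg_step (s : pran_state) (c : seq nat) (w : nat) : uniq c ->
  pran_deg (pran_step s c) w =
  (pran_deg s w + if w == nv s then size c else w \in c)%N.
Proof.
move=> c_uniq; rewrite /pran_deg /= count_cat count_map; congr (_ + _)%N.
case: eqVneq => [->|wv]; first by rewrite -count_predT; apply: eq_count => x /=; rewrite eqxx orbT.
by rewrite -count_uniq_mem //; apply: eq_count => x /=; rewrite [nv s == w]eq_sym (negbTE wv) orbF.
Qed.

Lemma clique_count_step (s : pran_state) (c : seq nat) (w : nat) : uniq c ->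
  clique_count (pran_step s c) w =
  (clique_count s w + if w == nv s then size c else (w \in c) * (size c).-1)%N.
Proof.
move=> c_uniq; rewrite /clique_count /= count_cat count_map; congr (_ + _)%N.
case: eqVneq => [->|wv]; first by rewrite -count_predT; apply: eq_count => u /=; rewrite inE eqxx.
have [wc|wc] := boolP (w \in c); last first.
  by rewrite mul0n -(count_pred0 c); apply: eq_count => u /=; rewrite inE mem_filter (negbTE wv) (negbTE wc) andbF.
rewrite mul1n -(count_predC1_uniq c_uniq wc); apply: eq_count => u /=.
by rewrite inE mem_filter (negbTE wv) wc andbT eq_sym.
Qed.

Section WellFormed.
Variable d : nat.

Record pran_wf (s : pran_state) : Prop := PranWf {
  pran_wf_nv : (d.+2 <= nv s)%N;
  pran_wf_size : size (cliques s) = (d.+2 + (nv s - d.+2) * d.+1)%N;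
  pran_wf_clique : forall c, c \in cliques s ->
    [/\ uniq c, size c = d.+1 & all (fun x => x < nv s)%N c];
  pran_wf_deg_out : forall w, (nv s <= w)%N -> pran_deg s w = 0%N;
  pran_wf_deg : forall w, (w < nv s)%N -> (d < pran_deg s w)%N;
  pran_wf_clique_count : forall w, (w < nv s)%N ->
    clique_count s w = clique_weight d (pran_deg s w) }.

Lemma clique_count_out (s : pran_state) (w : nat) :
  pran_wf s -> (nv s <= w)%N -> clique_count s w = 0%N.
Proof.
move=> wf_s vw; rewrite /clique_count -(count_pred0 (cliques s)).
apply: eq_in_count => c /(pran_wf_clique wf_s) [_ _ /allP c_lt].
by apply/negbTE/negP => /c_lt; rewrite ltnNge vw.
Qed.

Lemma pran_wf_step (s : pran_state) (c : seq nat) :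
  pran_wf s -> c \in cliques s -> pran_wf (pran_step s c).
Proof.
move=> wf_s cs; have [c_uniq c_size /allP c_lt] := pran_wf_clique wf_s cs.
have vc : nv s \notin c by apply/negP => /c_lt; rewrite ltnn.
split => /=.
- exact/leqW/(pran_wf_nv wf_s).
- by rewrite size_cat size_map (pran_wf_size wf_s) c_size subSn ?(pran_wf_nv wf_s) //; lia.
- move=> c'; rewrite mem_cat => /orP[/(pran_wf_clique wf_s)[u1 s1 /allP a1] | /mapP[u uc ->]].
    by split => //; apply/allP => x /a1 /ltnW.
  split => /=.
  + by rewrite mem_filter negb_and vc orbT filter_uniq.
  + by rewrite size_filter (count_predC1_uniq c_uniq uc) c_size.
  + by rewrite ltnSn; apply/allP => x; rewrite mem_filter => /andP[_ /c_lt /ltnW].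
- move=> w vw; have wv : w != nv s by rewrite gtn_eqF.
  rewrite pran_deg_step // (negbTE wv) (pran_wf_deg_out wf_s (ltnW vw)).
  by case: (boolP (w \in c)) => // /c_lt; rewrite ltnNge ltnW.
- move=> w; rewrite ltnS leq_eqVlt => /orP[/eqP-> | wv].
    by rewrite pran_deg_step // eqxx (pran_wf_deg_out wf_s) // c_size.
  by rewrite pran_deg_step // ltn_eqF //; exact: ltn_addr (pran_wf_deg wf_s wv).
- move=> w; rewrite ltnS leq_eqVlt => /orP[/eqP-> | wv].
    rewrite pran_deg_step // clique_count_step // eqxx (pran_wf_deg_out wf_s) //.
    by rewrite (clique_count_out wf_s) // c_size /clique_weight subSnn; lia.
  rewrite pran_deg_step // clique_count_step // ltn_eqF // (pran_wf_clique_count wf_s wv).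
  have dw := pran_wf_deg wf_s wv.
  by case: (w \in c); rewrite /= ?addn0 ?addn1 ?mul0n ?mul1n ?c_size // clique_weightS // ltnW.
Qed.

Lemma pran_wf_init : pran_wf (pran_init d).
Proof.
have deg_init w : pran_deg (pran_init d) w = if (w < d.+2)%N then d.+1 else 0%N.
  exact: (count_complete_graph_edges d.+2 w).
split => //.
- by rewrite /= size_map size_iota subnn mul0n addn0.
- move=> c /mapP[u uin ->]; split.
  + by rewrite filter_uniq // iota_uniq.
  + by rewrite size_filter (count_predC1_uniq (iota_uniq 0 d.+2) uin) size_iota.
  + by apply/allP => x; rewrite mem_filter mem_iota => /andP[_ /andP[]].
- by move=> w vw; rewrite deg_init ltnNge vw.
- by move=> w vw; rewrite deg_init vw.
- move=> w vw; rewrite deg_init vw /clique_weight subSnn muln1 /clique_count count_map.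
  have w_iota : w \in iota 0 d.+2 by rewrite mem_iota.
  have cnt : count (predC1 w) (iota 0 d.+2) = d.+1.
    by rewrite (count_predC1_uniq (iota_uniq 0 d.+2) w_iota) size_iota.
  rewrite -[in RHS]cnt; apply: eq_count => u.
  by rewrite inE mem_filter mem_iota vw leq0n !andbT eq_sym.
Qed.

End WellFormed.

Lemma sum_addn_bool_eq (T : Type) (l : seq T) (b : pred T) (n k : nat) :
  (\sum_(x <- l) (n + b x == k) + (n == k) * count b l =
   (n == k) * size l + (n.+1 == k) * count b l)%N.
Proof.
elim: l => [|x l IHl]; first by rewrite big_nil !muln0.
rewrite big_cons /=; case: (b x); rewrite ?addn0 ?addn1 /=;
  move: IHl; case: (n == k); case: (n.+1 == k); rewrite /= ?mul1n ?mul0n; lia.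
Qed.

Section OneStep.
Variables (d : nat) (s : pran_state).
Hypothesis wf_s : pran_wf d s.

Lemma Ndeg0 : Ndeg 0 s = 0%N.
Proof.
apply/eqP; rewrite /Ndeg eqn0Ngt -has_count; apply/hasPn => w.
by rewrite mem_iota => /andP[_ /(pran_wf_deg wf_s)]; case: (pran_deg s w).
Qed.

Lemma Ndeg_step (k : nat) (c : seq nat) : c \in cliques s ->
  Ndeg k (pran_step s c) =
  (count (fun w => pran_deg s w + (w \in c) == k) (iota 0 (nv s)) + (d.+1 == k))%N.
Proof.
move=> cs; have [c_uniq c_size _] := pran_wf_clique wf_s cs.
rewrite /Ndeg [nv _]/= -[(nv s).+1]addn1 iotaD count_cat /= addn0; congr (_ + _)%N.
  apply: eq_in_count => w; rewrite mem_iota add0n => /andP[_ wv].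
  by rewrite pran_deg_step // (ltn_eqF wv).
by rewrite add0n pran_deg_step // eqxx (pran_wf_deg_out wf_s) // c_size.
Qed.

(* Stated additively: the number of cliques avoiding a vertex of degree k is the
   truncated difference size (cliques s) - clique_weight d k. *)
Lemma sum_Ndeg_step (k : nat) : (0 < k)%N ->
  (\sum_(c <- cliques s) Ndeg k (pran_step s c) + Ndeg k s * clique_weight d k =
   Ndeg k s * size (cliques s) + Ndeg k.-1 s * clique_weight d k.-1
   + size (cliques s) * (k == d.+1))%N.
Proof.
move=> k_gt0; set L := size (cliques s).
have vertex_sum w : (w < nv s)%N ->
  (\sum_(c <- cliques s) (pran_deg s w + (w \in c) == k) + (pran_deg s w == k) * clique_weight d k =
   (pran_deg s w == k) * L + (pran_deg s w == k.-1) * clique_weight d k.-1)%N.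
  move=> wv; have := sum_addn_bool_eq (cliques s) (fun c => w \in c) (pran_deg s w) k.
  rewrite -/(clique_count s w) (pran_wf_clique_count wf_s wv).
  have eqSk j : (j.+1 == k) = (j == k.-1) by rewrite -{1}(prednK k_gt0) eqSS.
  rewrite eqSk; have [-> | _] := eqVneq (pran_deg s w) k.
    by rewrite -eqSk (gtn_eqF (ltnSn k)) !mul0n.
  by case: eqVneq => [->|].
rewrite big_seq (eq_bigr _ (fun c cs => Ndeg_step k cs)) -big_seq big_split /=.
have Ndeg_sum j : Ndeg j s = (\sum_(w <- iota 0 (nv s)) (pran_deg s w == j))%N.
  by rewrite sum_nat_of_bool.
have new_vertex : (\sum_(c <- cliques s) (d.+1 == k) = L * (k == d.+1))%N.
  by rewrite /L -sum1_size big_distrl eq_sym; apply: eq_bigr => c _ /=; rewrite mul1n.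
rewrite new_vertex addnAC; congr (_ + _)%N.
under eq_bigr => c _ do rewrite -sum_nat_of_bool.
rewrite exchange_big /= !Ndeg_sum !big_distrl -!big_split /= !big_seq.
by apply: eq_bigr => w; rewrite mem_iota => /andP[_ /vertex_sum].
Qed.
End OneStep.

Section Expectation.
Variables (R : realType) (d : nat).

Definition pran_mean (f : pran_state -> R) (s : pran_state) : R :=
  (size (cliques s))%:R^-1 *
  \sum_(i < size (cliques s)) f (pran_step s (nth [::] (cliques s) i)).

Lemma pran_expectS (t : nat) (f : pran_state -> R) :
  pran_expect d t.+1 f = pran_expect d t (pran_mean f).
Proof. by []. Qed.

Definition pran_reachable (t : nat) (s : pran_state) : Prop :=
  pran_wf d s /\ nv s = (d.+2 + t)%N.

Lemma pran_reachable_init : pran_reachable 0 (pran_init d).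
Proof. by split; [exact: pran_wf_init | rewrite addn0]. Qed.

Lemma pran_reachable_step (t : nat) (s : pran_state) (i : nat) :
  pran_reachable t s -> (i < size (cliques s))%N ->
  pran_reachable t.+1 (pran_step s (nth [::] (cliques s) i)).
Proof.
by move=> [wf_s vs] i_lt; split; [apply: pran_wf_step; rewrite ?mem_nth | rewrite /= vs addnS].
Qed.

Lemma pran_reachable_size (t : nat) (s : pran_state) :
  pran_reachable t s -> size (cliques s) = (d.+2 + t * d.+1)%N.
Proof. by move=> [wf_s vs]; rewrite (pran_wf_size wf_s) vs addKn. Qed.

Lemma eq_pran_expect (t : nat) (f g : pran_state -> R) :
  (forall s, pran_reachable t s -> f s = g s) -> pran_expect d t f = pran_expect d t g.
Proof.
elim: t f g => [|t IHt] f g fg; first exact/fg/pran_reachable_init.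
rewrite !pran_expectS; apply: IHt => s reach_s; congr (_ * _).
by apply: eq_bigr => i _; apply/fg/pran_reachable_step.
Qed.

Lemma pran_expect_affine (t : nat) (f g : pran_state -> R) (a b c : R) :
  pran_expect d t (fun s => a * f s + b * g s + c) =
  a * pran_expect d t f + b * pran_expect d t g + c.
Proof.
elim: t f g => [|t IHt] f g //; rewrite !pran_expectS -IHt.
apply: eq_pran_expect => s reach_s; rewrite /pran_mean !big_split /= -!mulr_sumr sumr_const card_ord.
have L_neq0 : (size (cliques s))%:R != 0 :> R by rewrite (pran_reachable_size reach_s) pnatr_eq0.
by rewrite -mulr_natr; field.
Qed.

Lemma pran_mean_Ndeg (s : pran_state) (k : nat) : pran_wf d s -> (0 < k)%N ->
  pran_mean (fun s => (Ndeg k s)%:R) s =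
  (1 - (clique_weight d k)%:R / (size (cliques s))%:R) * (Ndeg k s)%:R +
  (clique_weight d k.-1)%:R / (size (cliques s))%:R * (Ndeg k.-1 s)%:R + (k == d.+1)%:R.
Proof.
move=> wf_s k_gt0; rewrite /pran_mean.
have -> : \sum_(i < size (cliques s)) (Ndeg k (pran_step s (nth [::] (cliques s) i)))%:R =
          (\sum_(c <- cliques s) Ndeg k (pran_step s c))%:R :> R.
  by rewrite natr_sum (big_nth [::]) big_mkord.
have := congr1 (fun n => n%:R : R) (sum_Ndeg_step wf_s k_gt0); rewrite /= !natrD !natrM.
have L_neq0 : (size (cliques s))%:R != 0 :> R by rewrite (pran_wf_size wf_s) pnatr_eq0.
move: L_neq0; set L := (size (cliques s))%:R; set S := (\sum_(c <- _) _)%:R => L_neq0 sum_eq.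
by rewrite -[S](addrK ((Ndeg k s)%:R * (clique_weight d k)%:R)) sum_eq; field.
Qed.

Definition expected_Ndeg (t k : nat) : R := pran_expect d t (fun s => (Ndeg k s)%:R).

Lemma expected_Ndeg0 (t : nat) : expected_Ndeg t 0 = 0.
Proof.
rewrite /expected_Ndeg (@eq_pran_expect _ _ (fun s => 0 * (Ndeg 0 s)%:R + 0 * (Ndeg 0 s)%:R + 0)).
  by rewrite pran_expect_affine !mul0r !addr0.
by move=> s [wf_s _]; rewrite (Ndeg0 wf_s) !mul0r !addr0.
Qed.

Lemma expected_NdegS (t k : nat) : (0 < k)%N ->
  expected_Ndeg t.+1 k =
  (1 - (clique_weight d k)%:R / (d.+2 + t * d.+1)%:R) * expected_Ndeg t k +
  (clique_weight d k.-1)%:R / (d.+2 + t * d.+1)%:R * expected_Ndeg t k.-1 + (k == d.+1)%:R.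
Proof.
move=> k_gt0; rewrite /expected_Ndeg pran_expectS -pran_expect_affine.
apply: eq_pran_expect => s reach_s.
by rewrite pran_mean_Ndeg // ?(pran_reachable_size reach_s) //; case: reach_s.
Qed.
End Expectation.

Section Limit.
Variables (R : realType) (d : nat).

(* Vanishes for k <= d, so a single recursion from k = 0 covers all degrees. *)
Fixpoint pran_limit (k : nat) : R :=
  if k is k'.+1 then
    ((clique_weight d k')%:R * pran_limit k' + (d.+1 * (k' == d))%:R) /
    (d.+1 + clique_weight d k'.+1)%:R
  else 0.

Lemma cvg_expected_Ndeg (k : nat) (c : R) : 0 < c ->
  (fun t => expected_Ndeg R d t k / (t%:R + c)) @ \oo --> pran_limit k.
Proof.
elim: k c => [|k IHk] c c_gt0.
  under eq_fun => t do rewrite expected_Ndeg0 mul0r.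
  exact: cvg_cst.
set D : R := d.+1%:R; set G : R := d.+2%:R / D.
have D_gt0 : 0 < D by rewrite ltr0n.
have G_gt0 : 0 < G by rewrite divr_gt0 ?ltr0n.
have tG_gt0 t : 0 < t%:R + G by exact: ltr_pwDr G_gt0 (ler0n _ _).
have L_eq t : (d.+2 + t * d.+1)%:R = D * (t%:R + G) :> R.
  by rewrite natrD natrM /G; field; rewrite gt_eqF.
have a_ge0 : 0 <= (clique_weight d k.+1)%:R / D by rewrite divr_ge0 ?ler0n // ltW.
have -> : pran_limit k.+1 =
    ((clique_weight d k)%:R / D * pran_limit k + (k.+1 == d.+1)%:R) / (1 + (clique_weight d k.+1)%:R / D).
  rewrite [pran_limit k.+1]/= eqSS natrM natrD -/D; field.
  by rewrite nat1r -natrD !pnatr_eq0.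
pose b t := (clique_weight d k)%:R / D * (expected_Ndeg R d t k / (t%:R + G)) + (k.+1 == d.+1)%:R.
apply: (cvg_affine_recursion_div (g := G) (b := b)) => //.
- move=> t; rewrite expected_NdegS // L_eq /b; field.
  by rewrite !gt_eqF.
- apply: cvgD; last exact: cvg_cst.
  by apply: cvgM; [exact: cvg_cst | exact: IHk G_gt0].
Qed.

Lemma pran_limit_le (k : nat) : (k <= d)%N -> pran_limit k = 0.
Proof.
elim: k => // k IHk kd.
rewrite [pran_limit k.+1]/= IHk; last exact: ltnW.
by rewrite mulr0 add0r (ltn_eqF kd) muln0 mul0r.
Qed.

Lemma natr_clique_weight (j : nat) : (d <= j)%N ->
  (clique_weight d j)%:R = (d * j)%:R - (d * d)%:R + 1 :> R.
Proof.
by move=> dj; rewrite /clique_weight -natr1 mulnBr natrB // leq_mul2l dj orbT.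
Qed.

Lemma pran_limit_min_degree : pran_limit d.+1 = 1 / 2.
Proof.
rewrite [pran_limit d.+1]/= (pran_limit_le (leqnn d)) mulr0 add0r eqxx muln1.
rewrite /clique_weight subSnn muln1 natrD.
have d1_gt0 : 0 < 1 + d%:R :> R := ltr_pwDl ltr01 (ler0n _ _).
by field; rewrite gt_eqF // addr_gt0.
Qed.

Lemma pran_limit_ratio (k : nat) : (d.+1 < k)%N ->
  pran_limit k = ((d * k)%:R - (d * d)%:R - d%:R + 1) /
                 ((d * k)%:R - (d * d)%:R + d%:R + 2) * pran_limit k.-1.
Proof.
case: k => // k; rewrite ltnS => dk.
rewrite [pran_limit k.+1]/=.
rewrite (gtn_eqF dk) muln0 addr0 natrD (natr_clique_weight (ltnW dk)).
rewrite (natr_clique_weight (leqW (ltnW dk))) mulnS natrD.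
by rewrite [LHS]mulrAC; congr (_ * _^-1 * _); ring.
Qed.
End Limit.

Theorem mainTheorem3 (R : realType) (d : nat) (hd : (1 <= d)%N) :
  exists P : nat -> R,
    (forall k : nat, (d.+1 <= k)%N ->
       (fun t : nat => pran_expect d t (fun s => (Ndeg k s)%:R) / (d + 2 + t)%:R)
         @ \oo --> P k) /\
    P d.+1 = 1 / 2 /\
    (forall k : nat, (d.+1 < k)%N ->
       P k = ((d * k)%:R - (d * d)%:R - d%:R + 1) /
             ((d * k)%:R - (d * d)%:R + d%:R + 2) * P k.-1).
Proof.
exists (pran_limit R d); split; [|split].
- move=> k _; under eq_fun => t do rewrite natrD addrC.
  by apply: cvg_expected_Ndeg; rewrite ltr0n addn2.
- exact: pran_limit_min_degree.
- exact: pran_limit_ratio.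
Qed.
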